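(* Let $(t_n(x))_{n\ge0}$ be the generalized Gončarov basis associated with $(\mathfrak d,\mathcal Z)$, where $\mathfrak d$ is a delta operator and $\mathcal Z=(z_i)_{i\ge0}$ a grid. Then $(t_n)$ is of binomial type if and only if $\mathcal Z$ is an arithmetic progression with initial term $0$, i.e. there is $b\in\mathbb K$ with $z_i=ib$ for all $i\ge0$.
   Context: $\mathbb K$ is a field of characteristic zero; a delta operator is a linear operator $\mathfrak d$ on $\mathbb K[x]$ commuting with all shifts $E_a:f(x)\mapsto f(x+a)$ and with $\mathfrak d(x)$ a nonzero constant. $\varepsilon_z$ is evaluation at $z$. The generalized Gončarov basis associated with $(\mathfrak d,\mathcal Z)$ is the unique sequence $(t_n)_{n\ge0}$ with $\deg t_n=n$ and $\varepsilon_{z_i}(\mathfrak d^{\,i}(t_n))=n!\,\delta_{i,n}$ for all $i,n$. A sequence $(t_n)$ with $\deg t_n=n$ is of binomial type if $t_n(x+y)=\sum_{k=0}^n\binom nk t_k(x)t_{n-k}(y)$ for all $n$. *)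

From HB Require Import structures.
From mathcomp Require Import all_boot all_order all_algebra.
Set Implicit Arguments. Unset Strict Implicit. Unset Printing Implicit Defensive.
Import GRing.Theory.
Local Open Scope ring_scope.

Definition shift (K : fieldType) (a : K) (p : {poly K}) : {poly K} :=
  p \Po ('X + a%:P).

Definition is_delta_operator (K : fieldType) (d : {linear {poly K} -> {poly K}}) : Prop :=
  (forall (a : K) (p : {poly K}), d (shift a p) = shift a (d p)) /\
  (exists c : K, c != 0 /\ d 'X = c%:P).

Definition is_gen_goncarov_basis (K : fieldType) (d : {linear {poly K} -> {poly K}})
    (z : nat -> K) (t : nat -> {poly K}) : Prop :=
  (forall n, size (t n) = n.+1) /\
  (forall i n, (iter i d (t n)).[z i] = if i == n then (n`!)%:R else 0).

Definition binomial_type (K : fieldType) (t : nat -> {poly K}) : Prop :=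
  forall (n : nat) (x y : K),
    (t n).[x + y] = \sum_(k < n.+1) ('C(n, k))%:R * (t k).[x] * (t (n - k)%N).[y].

From HB Require Import structures.
From mathcomp Require Import all_boot all_order all_algebra.
Set Implicit Arguments.
Unset Strict Implicit.
Unset Printing Implicit Defensive.

Import GRing.Theory.
Local Open Scope ring_scope.

(* Expanding in the Gončarov basis, whose coefficients are read off by applying
   d^i and evaluating at z_i, shows that (t_n) is of binomial type iff
   (d^i t_n)(z_i + y) = n^_i t_(n-i)(y) for all i <= n.  For i = 1 this is the
   lowering relation d t_(m+1) = (m+1) E_(-z_1) t_m, which iterates to
   d^i t_n = n^_i E_(-i z_1) t_(n-i); at n = i+1, where t_1 has degree one, it
   forces z_i = i z_1.  Conversely, on a grid z_i = i b the lowering relation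
   with shift -b holds by uniqueness of Gončarov expansions, and it gives back
   the characterisation above. *)

Fact iter_is_linear (K : fieldType) (d : {linear {poly K} -> {poly K}}) i :
  linear (iter i d).
Proof. by elim: i => [|i IH] a p q //=; rewrite IH linearP. Qed.

HB.instance Definition _ (K : fieldType) (d : {linear {poly K} -> {poly K}}) i :=
  GRing.isLinear.Build K {poly K} {poly K} _ (iter i d) (iter_is_linear d i).

Section Shift.
Variable K : fieldType.
Implicit Types (a c x : K) (p : {poly K}).

Lemma horner_shift a p x : (shift a p).[x] = p.[x + a].
Proof. by rewrite /shift horner_comp hornerD hornerX hornerC. Qed.

Lemma shift0 p : shift 0 p = p.
Proof. by rewrite /shift addr0 comp_polyXr. Qed.

Lemma shiftD a c p : shift a (shift c p) = shift (a + c) p.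
Proof.
by rewrite /shift -comp_polyA comp_polyD comp_polyX comp_polyC -addrA -polyCD.
Qed.

Lemma shiftZ a c p : shift a (c *: p) = c *: shift a p.
Proof. exact: comp_polyZ. Qed.

Lemma size_shift a p : size (shift a p) = size p.
Proof. by rewrite /shift size_comp_poly2 // size_XaddC. Qed.

End Shift.

Definition lowers_by_shift (K : fieldType) (d : {poly K} -> {poly K}) (b : K)
    (t : nat -> {poly K}) : Prop :=
  forall m, d (t m.+1) = m.+1%:R *: shift (- b) (t m).

Lemma span_size_basis (K : fieldType) (t : nat -> {poly K}) n (p : {poly K}) :
  (forall k, size (t k) = k.+1) -> (size p <= n)%N ->
  exists c : nat -> K, p = \sum_(k < n) c k *: t k.
Proof.
move=> size_t; elim: n p => [|n IHn] p le_p_n.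
  by exists (fun=> 0); move: le_p_n; rewrite leqn0 size_poly_eq0 big_ord0 => /eqP.
have tn_n : (t n)`_n != 0.
  by rewrite -[n in _`_n]/(n.+1.-1) -(size_t n) -lead_coefE lead_coef_eq0 -size_poly_gt0 size_t.
pose a := p`_n / (t n)`_n.
have [c pE] : exists c : nat -> K, p - a *: t n = \sum_(k < n) c k *: t k.
  apply: IHn; apply/leq_sizeP => j; rewrite leq_eqVlt coefB coefZ.
  case/predU1P => [<-|lt_n_j]; first by rewrite divfK ?subrr.
  by rewrite !(leq_sizeP _ _ _ j lt_n_j) ?size_t ?mulr0 ?subrr.
exists (fun k => if k == n then a else c k).
rewrite big_ord_recr /= eqxx -[p](subrK (a *: t n)) pE; congr (_ + _).
by apply: eq_bigr => k _; rewrite ifN // neq_ltn ltn_ord.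
Qed.

Lemma horner_size2_inj (K : fieldType) (p : {poly K}) : size p = 2 -> injective (horner p).
Proof.
move=> size_p x y; rewrite !horner_coef size_p !big_ord_recr !big_ord0 /=.
rewrite !add0r !expr0 !mulr1 !expr1 => /addrI/mulfI-> //.
have : lead_coef p != 0 by rewrite lead_coef_eq0 -size_poly_gt0 size_p.
by rewrite lead_coefE size_p.
Qed.

Section Char0.
Variable K : fieldType.
Hypothesis K0 : [pchar K] =i pred0.
Implicit Types p : {poly K}.

Lemma pchar0_natf_eq0 n : (n%:R == 0 :> K) = (n == 0)%N.
Proof. exact: (pcharf0P K).1 K0 n. Qed.

Lemma fact_neq0 n : n`!%:R != 0 :> K.
Proof. by rewrite pchar0_natf_eq0 -lt0n fact_gt0. Qed.

Lemma pchar0_natf_inj : injective (fun n : nat => n%:R : K).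
Proof.
move=> m n; wlog le_mn : m n / (m <= n)%N => [hwlog|] E.
  by case: (leqP m n) => [|/ltnW] le; [exact: hwlog | symmetry; exact: hwlog].
apply/eqP; rewrite eqn_leq le_mn /= -subn_eq0 -pchar0_natf_eq0.
by rewrite natrB // E subrr.
Qed.

(* In characteristic 0 the naturals give infinitely many distinct points. *)
Lemma poly_horner_inj (p q : {poly K}) : (forall x, p.[x] = q.[x]) -> p = q.
Proof.
move=> pq; apply/eqP; rewrite -subr_eq0; apply/negPn/negP => nz_pq.
pose rs : seq K := [seq i%:R | i <- iota 0 (size (p - q))].
have roots_rs : all (root (p - q)) rs.
  by apply/allP => x _; rewrite /root hornerD hornerN pq subrr.
have uniq_rs : uniq rs by rewrite map_inj_uniq ?iota_uniq //; exact: pchar0_natf_inj.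
by have := max_poly_roots nz_pq roots_rs uniq_rs; rewrite size_map size_iota ltnn.
Qed.

Lemma shift_taylor (a : K) p :
  shift a p = \sum_(i < size p) (p^`N(i)).[a] *: 'X^i.
Proof.
apply: poly_horner_inj => x; rewrite horner_shift addrC nderiv_taylor ?horner_sum.
  by apply: eq_bigr => i _; rewrite hornerZ hornerXn.
exact: mulrC.
Qed.

Lemma binomial_typeP (t : nat -> {poly K}) : binomial_type t <->
  forall n y, shift y (t n) = \sum_(k < n.+1) ('C(n, k)%:R * (t (n - k)%N).[y]) *: t k.
Proof.
have expand n x y : (\sum_(k < n.+1) ('C(n, k)%:R * (t (n - k)%N).[y]) *: t k).[x]
    = \sum_(k < n.+1) 'C(n, k)%:R * (t k).[x] * (t (n - k)%N).[y].
  by rewrite horner_sum; apply: eq_bigr => k _; rewrite hornerZ mulrAC.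
split=> [bt n y | tE n x y].
  by apply: poly_horner_inj => x; rewrite horner_shift bt expand.
by rewrite -expand -tE horner_shift.
Qed.

Variable d : {linear {poly K} -> {poly K}}.

Section Goncarov.
Variables (z : nat -> K) (t : nat -> {poly K}).
Hypothesis ht : is_gen_goncarov_basis d z t.

Lemma goncarov_coef n i (c : nat -> K) : (i < n)%N ->
  (iter i d (\sum_(k < n) c k *: t k)).[z i] = c i * i`!%:R.
Proof.
move=> lt_i_n; rewrite linear_sum horner_sum (bigD1 (Ordinal lt_i_n)) //= big1.
  by rewrite linearZ hornerZ ht.2 eqxx addr0.
move=> k ne_k_i; rewrite linearZ hornerZ ht.2 ifN ?mulr0 //.
by apply: contra ne_k_i => /eqP eq_ik; apply/eqP/val_inj.
Qed.

Lemma goncarov_expansion n p : (size p <= n)%N ->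
  p = \sum_(k < n) ((iter k d p).[z k] / k`!%:R) *: t k.
Proof.
move=> le_p_n; have [c pE] := span_size_basis ht.1 le_p_n.
rewrite {1}pE; apply: eq_bigr => k _.
by rewrite pE goncarov_coef // mulfK ?fact_neq0.
Qed.

Lemma goncarov_eq0 n p : (size p <= n)%N ->
  (forall i, (i < n)%N -> (iter i d p).[z i] = 0) -> p = 0.
Proof.
move=> le_p_n p0; rewrite (goncarov_expansion le_p_n) big1 // => k _.
by rewrite p0 // mul0r scale0r.
Qed.

End Goncarov.

Section ShiftInvariant.
Hypothesis d_shift : forall a p, d (shift a p) = shift a (d p).

Lemma iter_shift i a p : iter i d (shift a p) = shift a (iter i d p).
Proof. by elim: i => [|i IH] //=; rewrite IH d_shift. Qed.

Lemma shift_invariant_nderivE p :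
  d p = \sum_(i < size p) (d 'X^i).[0] *: p^`N(i).
Proof.
apply: poly_horner_inj => a.
rewrite -[a]add0r -horner_shift -d_shift add0r shift_taylor linear_sum !horner_sum.
by apply: eq_bigr => i _; rewrite linearZ !hornerZ mulrC.
Qed.

Lemma iter_lowers_by_shift (t : nat -> {poly K}) b : lowers_by_shift d b t ->
  forall n i, (i <= n)%N ->
  iter i d (t n) = (n ^_ i)%:R *: shift (- (i%:R * b)) (t (n - i)%N).
Proof.
move=> rec n; elim=> [|i IHi] lt_i_n.
  by rewrite ffactn0 mul0r oppr0 shift0 subn0 scale1r.
rewrite iterS IHi ?(ltnW lt_i_n) // linearZZ d_shift -(subnSK lt_i_n) rec shiftZ shiftD.
by rewrite scalerA -natrM subnSK // -ffactnSr -nat1r mulrDl mul1r opprD addrC.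
Qed.

Hypothesis dX_const : exists c : K, d 'X = c%:P.

Lemma delta1 : d 1 = 0.
Proof.
have [c dX] := dX_const.
have := d_shift 1 'X; rewrite dX /shift comp_polyC comp_polyX linearD dX.
by move/(canRL (addKr _)); rewrite addNr.
Qed.

Lemma size_delta p : (size (d p) <= (size p).-1)%N.
Proof.
rewrite shift_invariant_nderivE; apply: (leq_trans (size_sum _ _ _)).
apply/bigmax_leqP => -[[|i] _] _ /=.
  by rewrite expr0 delta1 horner0 scale0r size_poly0.
apply: (leq_trans (size_scale_leq _ _)); apply/leq_sizeP => j le_j.
rewrite coef_nderivn nth_default ?mul0rn //; apply: leq_trans (leqSpred _) _.
by rewrite addSn ltnS (leq_trans le_j) ?leq_addl.
Qed.

Section GoncarovShift.
Variables (z : nat -> K) (t : nat -> {poly K}).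
Hypothesis ht : is_gen_goncarov_basis d z t.

Lemma binomial_type_goncarovE : binomial_type t <->
  forall n i y, (i <= n)%N -> (iter i d (t n)).[z i + y] = (n ^_ i)%:R * (t (n - i)%N).[y].
Proof.
split=> [/binomial_typeP tE n i y le_i_n | tE]; last apply/binomial_typeP => n y.
  rewrite -horner_shift -iter_shift tE.
  rewrite (@goncarov_coef z t ht n.+1 i (fun k => 'C(n, k)%:R * (t (n - k)%N).[y])) //.
  by rewrite -bin_ffact natrM mulrAC.
rewrite [LHS](goncarov_expansion ht (n := n.+1)); last by rewrite size_shift ht.1.
apply: eq_bigr => -[k /=]; rewrite ltnS => le_k_n _.
by rewrite iter_shift horner_shift tE // -bin_ffact natrM mulrAC mulfK ?fact_neq0.
Qed.

Lemma binomial_lowers_by_shift : binomial_type t -> lowers_by_shift d (z 1%N) t.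
Proof.
move/binomial_type_goncarovE => tE m; apply: poly_horner_inj => x.
have := tE m.+1 1%N (x - z 1%N) isT.
by rewrite /= addrC subrK ffactn1 subSS subn0 hornerZ horner_shift.
Qed.

Lemma arith_grid_lowers_by_shift b :
  (forall i, z i.+1 = z i + b) -> lowers_by_shift d b t.
Proof.
move=> zS m; rewrite -[d _]shift0 -(addNr b) -shiftD -shiftZ; congr (shift _ _).
apply/eqP; rewrite -subr_eq0; apply/eqP; apply: (goncarov_eq0 ht (n := m.+1)).
  rewrite (leq_trans (size_polyD _ _)) // geq_max size_shift size_polyN.
  by rewrite (leq_trans (size_delta _)) ?(leq_trans (size_scale_leq _ _)) ?ht.1.
move=> i _; rewrite linearB linearZ /= hornerD hornerN hornerZ iter_shift horner_shift.
rewrite -iterSr -zS !ht.2 eqSS.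
by case: eqP => _; [rewrite factS natrM subrr | rewrite mulr0 subrr].
Qed.

Lemma binomial_lowers_grid b : binomial_type t -> lowers_by_shift d b t ->
  forall i, z i = i%:R * b.
Proof.
move=> /binomial_type_goncarovE tE rec i; apply/eqP; rewrite -subr_eq0; apply/eqP.
have ffact_neq0 : (i.+1 ^_ i)%:R != 0 :> K.
  by rewrite pchar0_natf_eq0 -lt0n ffact_gt0.
have := tE i.+1 i 0 (leqnSn i).
rewrite (iter_lowers_by_shift rec) // hornerZ horner_shift subSnn addr0.
by move/(mulfI ffact_neq0)/(horner_size2_inj (ht.1 1%N)).
Qed.

End GoncarovShift.
End ShiftInvariant.
End Char0.

Theorem mainTheorem14 (K : fieldType) (hK : [pchar K] =i pred0)
    (d : {linear {poly K} -> {poly K}}) (z : nat -> K) (t : nat -> {poly K})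
    (hd : is_delta_operator d) (ht : is_gen_goncarov_basis d z t) :
  binomial_type t <-> exists b : K, forall i : nat, z i = i%:R * b.
Proof.
have [d_shift [c [_ dX]]] := hd.
split=> [bt | [b zE]].
  exists (z 1%N); apply: (binomial_lowers_grid hK d_shift ht bt).
  exact: (binomial_lowers_by_shift hK d_shift ht bt).
have zS i : z i.+1 = z i + b by rewrite !zE -nat1r mulrDl mul1r addrC.
have rec := arith_grid_lowers_by_shift hK d_shift (ex_intro _ c dX) ht zS.
apply/(binomial_type_goncarovE hK d_shift ht) => n i y le_i_n.
by rewrite (iter_lowers_by_shift d_shift rec) // hornerZ horner_shift zE addrAC subrr add0r.
Qed.
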